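(* Let $\{(Y_i,\tilde Y_i)\}_{i\in\mathbb Z}$ be i.i.d. with law $P_{Y\tilde Y}$, assume $I(Y;\tilde Y)>0$, and let $E_+>0$ be a constant such that for every $m\in\mathbb N_+$ and any i.i.d. pairs $(U_i,V_i)\sim P_Y\otimes P_Y$ one has $\mathbb P[\sum_{i=1}^m\log\lambda(U_i,V_i)>0]\le\exp[-mE_+]$ (such a constant exists). Then for every integer $k\ge1$ and every $t\in\mathbb N_+$, \[ \mathbb P\!\left[\sum_{i=1}^t\log\lambda(Y_{k+i},\tilde Y_i)>0\right]\le2\exp\!\left[-(t-1)\frac{E_+}{2}\right]. \]
   Context: $\mathcal X,\mathcal Y$ finite alphabets; logs base $|\mathcal X|$ and $\exp$ in the same base. Given $P_X$ and a channel $P_{Y\mid X}$: $P_Y$ is the $Y$-marginal of $P_X\otimes P_{Y\mid X}$ (assume $P_Y(y)>0$ for all $y$), $P_{Y\tilde Y}(y,\tilde y):=\sum_xP_X(x)P_{Y\mid X}(y\mid x)P_{Y\mid X}(\tilde y\mid x)$ (note its $\tilde Y$-marginal is also $P_Y$), $\lambda(y,\tilde y):=P_{Y\tilde Y}(y,\tilde y)/(P_Y(y)P_Y(\tilde y))$, and $I(Y;\tilde Y)$ is the mutual information under $P_{Y\tilde Y}$. *)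

From HB Require Import structures.
From mathcomp Require Import all_boot all_order all_algebra.
From mathcomp Require Import all_classical all_reals all_analysis.
Set Implicit Arguments. Unset Strict Implicit. Unset Printing Implicit Defensive.
Import Order.TTheory GRing.Theory Num.Theory.
Local Open Scope ring_scope.

Section Defs.
Variables (R : realType) (X Y : finType).
Variables (PX : X -> R) (W : X -> Y -> R).

Definition PY (y : Y) : R := \sum_(x : X) PX x * W x y.

Definition PYY (y yt : Y) : R := \sum_(x : X) PX x * W x y * W x yt.

Definition lam (y yt : Y) : R := PYY y yt / (PY y * PY yt).

(* logarithm and exponential in base b (the paper uses b = |X|) *)
Definition logb (b x : R) : R := ln x / ln b.
Definition expb (b x : R) : R := b `^ x.

(* extended logarithm: log 0 = -oo (needed since lambda may vanish) *)
Definition elogb (b x : R) : \bar R :=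
  if 0 < x then (logb b x)%:E else -oo%E.

Definition MI (b : R) : R :=
  \sum_(y : Y) \sum_(yt : Y)
     (if 0 < PYY y yt then PYY y yt * logb b (lam y yt) else 0).
End Defs.

From HB Require Import structures.
From mathcomp Require Import all_boot all_order all_algebra.
From mathcomp Require Import all_classical all_reals all_analysis.
From mathcomp Require Import lra zify.
Import Order.TTheory GRing.Theory Num.Theory.

(* The pairs (Y_(k+i), Yt_i), i < t, are not independent: Y_(k+i) and
   Yt_(k+i) belong to the same draw.  Colour the indices 0 .. t-1 so that i
   and i + k always get different colours and each colour class has at least
   t/2 elements.  Within one class every position is read at most once, so the
   pairs are distributed as P_Y (x) P_Y and the hypothesis on E_+ applies to the
   partial sum over the class.  A positive total sum has a positive partial sum
   over one of the two classes, and a union bound gives the factor 2. *)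

Set Implicit Arguments. Unset Strict Implicit. Unset Printing Implicit Defensive.

(* Odd k: parity of i.  Even k: parity of i flipped on every other block of
   length k; shifting by k changes the block, while 2j and 2j+1 share one. *)
Definition shift_coloring (k i : nat) : bool :=
  if odd k then odd i else odd (i + i %/ k).

Lemma shift_coloringDk k i : (0 < k)%N ->
  shift_coloring k (i + k) = ~~ shift_coloring k i.
Proof.
move=> k_gt0; rewrite /shift_coloring; case: ifP => odd_k.
  by rewrite oddD odd_k addbT.
rewrite divnDr ?dvdnn // divnn k_gt0 !oddD odd_k.
by case: (odd i); case: (odd (i %/ k)).
Qed.

Lemma shift_coloring_doubleS k j : (0 < k)%N ->
  shift_coloring k j.*2.+1 = ~~ shift_coloring k j.*2.
Proof.
move=> k_gt0; rewrite /shift_coloring; case: ifP => odd_k /=.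
  by rewrite odd_double.
have k_ndvd : (k %| j.*2.+1) = false.
  by apply: contraFF odd_k => /dvdn_odd; apply; rewrite /= odd_double.
by rewrite divnS // k_ndvd add0n.
Qed.

Lemma count_iota_alternating (c : pred nat) :
  (forall j, c j.*2.+1 = ~~ c j.*2) -> forall n, count c (iota 0 n.*2) = n.
Proof.
move=> c_alt; elim=> // n IHn.
rewrite doubleS -addn2 iotaD count_cat IHn /= c_alt.
by case: (c n.*2) => /=; rewrite ?addn1 ?addn0.
Qed.

Lemma card_alternating_ge_half (c : pred nat) t :
  (forall j, c j.*2.+1 = ~~ c j.*2) -> (t./2 <= #|[set i : 'I_t | c i]|)%N.
Proof.
move=> c_alt.
have -> : #|[set i : 'I_t | c i]| = count c (iota 0 t).
  by rewrite cardsE cardE /enum_mem size_filter -enumT /= -val_enum_ord count_map.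
rewrite -[t in iota 0 t]odd_double_half addnC iotaD count_cat.
by rewrite count_iota_alternating // leq_addr.
Qed.

Definition shift_free t k (S : {set 'I_t}) :=
  forall i i' : 'I_t, i \in S -> i' \in S -> i' != i + k :> nat.

Definition color_class t k (c : bool) : {set 'I_t} :=
  [set i : 'I_t | shift_coloring k i == c].

Lemma color_class_shift_free t k c : (0 < k)%N -> shift_free k (color_class t k c).
Proof.
move=> k_gt0 i i'; rewrite !inE => /eqP ci /eqP ci'; apply/eqP => ii'.
by move: ci'; rewrite ii' shift_coloringDk // ci => /eqP; case: c {ci}.
Qed.

Lemma card_color_class t k c : (0 < k)%N -> (t./2 <= #|color_class t k c|)%N.
Proof.
move=> k_gt0; apply: (card_alternating_ge_half (c := fun i => shift_coloring k i == c)) => j.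
by rewrite shift_coloring_doubleS //; case: (shift_coloring k j.*2); case: c.
Qed.

Lemma setC_color_class t k c : ~: color_class t k c = color_class t k (~~ c).
Proof. by apply/setP => i; rewrite !inE; case: c; case: (shift_coloring k i). Qed.

Local Open Scope ring_scope.

Lemma prod_preim_exchange (R : comNzRingType) (I J : finType) (a : I -> J)
    (g : J -> I -> R) :
  \prod_j \prod_(i | a i == j) g j i = \prod_i g (a i) i.
Proof.
under eq_bigr do rewrite big_mkcond /=.
rewrite exchange_big /=; apply: eq_bigr => i _.
by rewrite -big_mkcond /= (big_pred1 (a i)) // => j; rewrite /= eq_sym.
Qed.

Lemma prod_preim_inj (R : comNzRingType) (I J : finType) (a : I -> J) :
  injective a -> forall i (G : I -> R), \prod_(i' | a i' == a i) G i' = G i.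
Proof. by move=> a_inj i G; rewrite (big_pred1 i) // => i'; rewrite /= (inj_eq a_inj). Qed.

Lemma prod_preim_none (R : comNzRingType) (I J : finType) (a : I -> J) j :
  (forall i, (a i == j) = false) -> forall G : I -> R, \prod_(i | a i == j) G i = 1.
Proof. by move=> a_nj G; apply: big_pred0. Qed.

Lemma ffun_eq_indicator (R : comNzRingType) (I : finType) (T : eqType)
    (f g : {ffun I -> T}) :
  (f == g)%:R = \prod_i (f i == g i)%:R :> R.
Proof.
case: (pickP (fun i => f i != g i)) => [i neq_i | eq_fg].
  have neq_fg : f != g by apply: contraNneq neq_i => ->.
  by rewrite (negbTE neq_fg) (bigD1 i) //= (negbTE neq_i) mul0r.
have -> : f = g by apply/ffunP => i; apply/eqP/negbFE/eq_fg.
by rewrite eqxx big1 // => i _; rewrite eqxx.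
Qed.

Lemma sum_mul_eq_indicator (R : comNzRingType) (I : finType) (F : I -> R) u :
  \sum_i F i * (i == u)%:R = F u.
Proof.
under eq_bigr do rewrite mulr_natr mulrb.
by rewrite -big_mkcond big_pred1_eq.
Qed.

Lemma sum_pair (R : comNzRingType) (I J : finType) (F : I * J -> R) :
  \sum_z F z = \sum_i \sum_j F (i, j).
Proof. by rewrite pair_big; apply: eq_big => // -[]. Qed.

Section ProductMarginal.
Variables (R : comNzRingType) (Y : finType) (p : Y -> Y -> R) (q1 q2 : Y -> R).
Hypothesis p_sumr : forall y, \sum_yt p y yt = q1 y.
Hypothesis p_suml : forall yt, \sum_y p y yt = q2 yt.
Hypothesis q1_sum1 : \sum_y q1 y = 1.

Lemma sum_joint_pin1 u : \sum_(z : Y * Y) p z.1 z.2 * (z.1 == u)%:R = q1 u.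
Proof.
rewrite sum_pair -(sum_mul_eq_indicator q1); apply: eq_bigr => y _.
by rewrite -p_sumr mulr_suml.
Qed.

Lemma sum_joint_pin2 v : \sum_(z : Y * Y) p z.1 z.2 * (z.2 == v)%:R = q2 v.
Proof.
rewrite sum_pair exchange_big -(sum_mul_eq_indicator q2); apply: eq_bigr => yt _.
by rewrite -p_suml mulr_suml.
Qed.

Lemma sum_joint1 : \sum_(z : Y * Y) p z.1 z.2 = 1.
Proof. by rewrite sum_pair -q1_sum1; apply: eq_bigr => y _; rewrite p_sumr. Qed.

Variables (m : nat) (J : finType) (al be : 'I_m -> J).
Hypotheses (al_inj : injective al) (be_inj : injective be).
Hypothesis al_neq_be : forall l l', al l != be l'.
Variable uv : {ffun 'I_m -> Y * Y}.

Lemma sum_joint_pinned j :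
  \sum_(z : Y * Y) p z.1 z.2 * ((\prod_(l | al l == j) (z.1 == (uv l).1)%:R) *
                                (\prod_(l | be l == j) (z.2 == (uv l).2)%:R))
  = (\prod_(l | al l == j) q1 (uv l).1) * (\prod_(l | be l == j) q2 (uv l).2).
Proof.
case: (pickP (fun l => al l == j)) => [l /eqP <- | al_nj].
  have be_nal l' : (be l' == al l) = false by rewrite eq_sym (negbTE (al_neq_be _ _)).
  rewrite [in RHS](prod_preim_inj al_inj) [in RHS](prod_preim_none be_nal).
  rewrite mulr1 -sum_joint_pin1; apply: eq_bigr => z _.
  by rewrite (prod_preim_inj al_inj) (prod_preim_none be_nal) mulr1.
rewrite [in RHS](prod_preim_none al_nj) mul1r.
case: (pickP (fun l => be l == j)) => [l /eqP be_l | be_nj].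
  subst j.
  rewrite [in RHS](prod_preim_inj be_inj) -sum_joint_pin2; apply: eq_bigr => z _.
  by rewrite (prod_preim_none al_nj) (prod_preim_inj be_inj) mul1r.
rewrite [in RHS](prod_preim_none be_nj) -[RHS]sum_joint1; apply: eq_bigr => z _.
by rewrite (prod_preim_none al_nj) (prod_preim_none be_nj) !mulr1.
Qed.

Lemma sum_product_marginal :
  \sum_(f : {ffun J -> Y * Y} | [ffun l => ((f (al l)).1, (f (be l)).2)] == uv)
      \prod_j p (f j).1 (f j).2
  = \prod_l (q1 (uv l).1 * q2 (uv l).2).
Proof.
pose h j (z : Y * Y) := p z.1 z.2 *
  ((\prod_(l | al l == j) (z.1 == (uv l).1)%:R) *
   (\prod_(l | be l == j) (z.2 == (uv l).2)%:R)).
(* The constraint on f splits into one factor per coordinate j, so the sum of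
   products over f becomes a product over j of sums over the value f j. *)
have indicator_factor (f : {ffun J -> Y * Y}) :
    ([ffun l => ((f (al l)).1, (f (be l)).2)] == uv)%:R *
      \prod_j p (f j).1 (f j).2 = \prod_j h j (f j).
  rewrite ffun_eq_indicator.
  under eq_bigr do rewrite ffunE [uv _]surjective_pairing xpair_eqE -mulnb natrM.
  rewrite big_split /= -(prod_preim_exchange al (fun j l => ((f j).1 == (uv l).1)%:R)).
  rewrite -(prod_preim_exchange be (fun j l => ((f j).2 == (uv l).2)%:R)).
  by rewrite mulrC -!big_split.
rewrite big_mkcond (eq_bigr (fun f : {ffun J -> Y * Y} => \prod_j h j (f j))) => [|f _]; last first.
  by rewrite -indicator_factor; case: eqP; rewrite ?mul1r ?mul0r.
rewrite -bigA_distr_bigA /=.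
under eq_bigr do rewrite sum_joint_pinned.
by rewrite big_split /= !prod_preim_exchange -big_split.
Qed.

End ProductMarginal.

Lemma ler_sum_cover (R : numDomainType) (I : finType) (P P1 P2 : pred I)
    (w : I -> R) :
  (forall i, 0 <= w i) -> (forall i, P i -> P1 i || P2 i) ->
  \sum_(i | P i) w i <= \sum_(i | P1 i) w i + \sum_(i | P2 i) w i.
Proof.
move=> w_ge0 cover; rewrite (big_mkcond P) (big_mkcond P1) (big_mkcond P2).
rewrite -big_split /=; apply: ler_sum => i _.
have w_ge0' b : 0 <= (if b then w i else 0) by case: b.
case: (boolP (P i)) => [/cover/orP[]-> | _]; last exact: addr_ge0.
- by rewrite lerDl.
- by rewrite lerDr.
Qed.

Lemma sume_gt0_setC (R : realDomainType) (I : finType) (A : {set I})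
    (g : I -> \bar R) :
  (0 < \sum_i g i)%E -> (0 < \sum_(i in A) g i)%E || (0 < \sum_(i in ~: A) g i)%E.
Proof.
have -> : (\sum_i g i = \sum_(i in A) g i + \sum_(i in ~: A) g i)%E.
  by rewrite (bigID (mem A)) /=; congr (_ + _)%E; apply: eq_bigl => i; rewrite inE.
by apply: contraTT; rewrite negb_or -!leNgt => /andP[? ?]; apply: adde_le0.
Qed.

Section ChannelOutputPairs.
Variables (R : realType) (X Y : finType) (PX : X -> R) (W : X -> Y -> R).
Hypothesis PX_sum1 : \sum_x PX x = 1.
Hypothesis W_sum1 : forall x, \sum_y W x y = 1.

Lemma PYY_sumr y : \sum_yt PYY PX W y yt = PY PX W y.
Proof.
rewrite /PYY /PY exchange_big; apply: eq_bigr => x _.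
by rewrite -mulr_sumr W_sum1 mulr1.
Qed.

Lemma PYY_suml yt : \sum_y PYY PX W y yt = PY PX W yt.
Proof.
rewrite /PYY /PY exchange_big; apply: eq_bigr => x _.
by under eq_bigr do rewrite mulrAC; rewrite -mulr_sumr W_sum1 mulr1.
Qed.

Lemma PY_sum1 : \sum_y PY PX W y = 1.
Proof.
rewrite /PY exchange_big -[RHS]PX_sum1; apply: eq_bigr => x _.
by rewrite -mulr_sumr W_sum1 mulr1.
Qed.

Variable Eplus : R.
Hypothesis HE : forall m : nat, (0 < m)%N ->
  \sum_(uv : {ffun 'I_m -> Y * Y} |
          (0 < \sum_(i < m) elogb (#|X|%:R) (lam PX W (uv i).1 (uv i).2))%E)
     \prod_(i < m) (PY PX W (uv i).1 * PY PX W (uv i).2)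
  <= expb (#|X|%:R) (- (m%:R * Eplus)).

Lemma shift_free_tail_bound k t (S : {set 'I_t}) : shift_free k S ->
  \sum_(f : {ffun 'I_(k + t) -> Y * Y} |
          (0 < \sum_(i in S) elogb (#|X|%:R)
                 (lam PX W (f (rshift k i)).1 (f (widen_ord (leq_addl k t) i)).2))%E)
     \prod_(j < k + t) PYY PX W (f j).1 (f j).2
  <= expb (#|X|%:R) (- (#|S|%:R * Eplus)).
Proof.
move=> S_free; set m := #|S|.
pose al (l : 'I_m) : 'I_(k + t) := rshift k (enum_val l).
pose be (l : 'I_m) : 'I_(k + t) := widen_ord (leq_addl k t) (enum_val l).
have al_inj : injective al by move=> l l' /rshift_inj /enum_val_inj.
have be_inj : injective be by move=> l l' /(congr1 val) /= /val_inj /enum_val_inj.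
have al_neq_be l l' : al l != be l'.
  apply/negP => /eqP /(congr1 val) /= eq_ll'.
  by move: (S_free _ _ (enum_valP l) (enum_valP l')); rewrite -eq_ll' addnC eqxx.
pose F (f : {ffun 'I_(k + t) -> Y * Y}) : {ffun 'I_m -> Y * Y} :=
  [ffun l => ((f (al l)).1, (f (be l)).2)].
pose E (uv : {ffun 'I_m -> Y * Y}) :=
  (0 < \sum_(l < m) elogb (#|X|%:R) (lam PX W (uv l).1 (uv l).2))%E.
rewrite (eq_bigl (fun f => E (F f))) => [|f]; last first.
  by rewrite /E big_enum_val; under [in RHS]eq_bigr do rewrite ffunE.
rewrite (partition_big F E) //=.
under eq_bigr => uv Euv.
  rewrite (eq_bigl (fun f => F f == uv)) => [|f]; last by case: eqP => [->|_]; rewrite ?Euv ?andbF.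
  rewrite (sum_product_marginal PYY_sumr PYY_suml PY_sum1 al_inj be_inj al_neq_be).
  over.
have [m0|m_gt0] := posnP m; last exact: HE.
rewrite big_pred0 ?powR_ge0 // => uv; rewrite /E.
by move: uv; rewrite m0 => uv; rewrite big_ord0 ltxx.
Qed.

End ChannelOutputPairs.

Lemma expb_half_le (R : realType) (b E : R) (n t : nat) :
  1 <= b -> 0 <= E -> (t./2 <= n)%N ->
  expb b (- (n%:R * E)) <= expb b (- ((t%:R - 1) * (E / 2))).
Proof.
move=> b_ge1 E_ge0 tn; apply: ler_powR => //.
have : (t <= n.*2.+1)%N.
  by move: (odd_double_half t) tn; case: (odd t); rewrite -!muln2; lia.
rewrite -(ler_nat R) -addn1 natrD -muln2 natrM => ?; nra.
Qed.

Unset Implicit Arguments.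

Theorem mainTheorem12 (R : realType) (X Y : finType)
  (PX : X -> R) (W : X -> Y -> R)
  (PX_ge0 : forall x, 0 <= PX x) (PX_sum1 : \sum_(x : X) PX x = 1)
  (W_ge0 : forall x y, 0 <= W x y) (W_sum1 : forall x, \sum_(y : Y) W x y = 1)
  (PY_gt0 : forall y, 0 < PY PX W y)
  (I_gt0 : 0 < MI PX W (#|X|%:R))
  (Eplus : R) (Eplus_gt0 : 0 < Eplus)
  (HE : forall m : nat, (0 < m)%N ->
     \sum_(uv : {ffun 'I_m -> Y * Y} |
             (0 < \sum_(i < m) elogb (#|X|%:R) (lam PX W (uv i).1 (uv i).2))%E)
        \prod_(i < m) (PY PX W (uv i).1 * PY PX W (uv i).2)
     <= expb (#|X|%:R) (- (m%:R * Eplus)))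
  (k t : nat) (hk : (1 <= k)%N) (ht : (0 < t)%N) :
  \sum_(f : {ffun 'I_(k + t) -> Y * Y} |
          (0 < \sum_(i < t) elogb (#|X|%:R)
                 (lam PX W (f (rshift k i)).1 (f (widen_ord (leq_addl k t) i)).2))%E)
     \prod_(j < k + t) PYY PX W (f j).1 (f j).2
  <= 2 * expb (#|X|%:R) (- ((t%:R - 1) * (Eplus / 2))).
Proof.
have b_ge1 : 1 <= (#|X|%:R : R).
  rewrite ler1n lt0n; apply/eqP => /card0_eq X0.
  by move: PX_sum1; rewrite big_pred0 // => /eqP; rewrite eq_sym oner_eq0.
pose A := color_class t k true.
have tail_le (S : {set 'I_t}) : shift_free k S -> (t./2 <= #|S|)%N ->
  \sum_(f : {ffun 'I_(k + t) -> Y * Y} |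
          (0 < \sum_(i in S) elogb (#|X|%:R)
                 (lam PX W (f (rshift k i)).1 (f (widen_ord (leq_addl k t) i)).2))%E)
     \prod_(j < k + t) PYY PX W (f j).1 (f j).2
  <= expb (#|X|%:R) (- ((t%:R - 1) * (Eplus / 2))).
  move=> S_free S_card; apply: le_trans (shift_free_tail_bound PX_sum1 W_sum1 HE S_free) _.
  exact: expb_half_le (ltW Eplus_gt0) S_card.
rewrite mulr_natl mulr2n; apply: le_trans (lerD (tail_le A _ _) (tail_le (~: A) _ _)).
- apply: ler_sum_cover => [f | f]; last exact: sume_gt0_setC.
  by apply: prodr_ge0 => j _; apply: sumr_ge0 => x _; rewrite !mulr_ge0.
- exact: color_class_shift_free.
- exact: card_color_class.
- by rewrite setC_color_class; apply: color_class_shift_free.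
- by rewrite setC_color_class; apply: card_color_class.
Qed.
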